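(* Let $m\ge 2$ and let $\mathcal{A}\subseteq\mathcal{P}([m])$ be a finite union-closed, separating collection of sets with universe $U(\mathcal{A})=[m]=\{1,\dots,m\}$, where the elements are labelled so that $|1|_{\mathcal{A}}\le |2|_{\mathcal{A}}\le\dots\le |m|_{\mathcal{A}}$. For $i\in[m-1]$ let $A_i:=\bigcup_{A\in\mathcal{A},\, i\notin A} A$, let $A_0:=U(\mathcal{A})$, and let $\mathcal{S}$ be the collection $\{A_0,A_1,\dots,A_{m-1}\}$. Then for every $i\in\{1,\dots,m-1\}$ with $|i|_{\mathcal{S}}<m-1$, there exists an element $k\in\{1,\dots,m-1\}$ with $|k|_{\mathcal{S}}=m-1$ that dominates $i$ in $\mathcal{A}$.
   Context: A collection $\mathcal{A}$ of sets is union-closed if $S,T\in\mathcal{A}$ implies $S\cup T\in\mathcal{A}$. The universe $U(\mathcal{A})$ is $\bigcup_{A\in\mathcal{A}}A$. $\mathcal{A}$ is separating if for any two distinct elements of $U(\mathcal{A})$ there is a set in $\mathcal{A}$ containing one of them but not the other. For an element $a$ and a collection $\mathcal{B}$, $|a|_{\mathcal{B}}$ denotes the number of sets in $\mathcal{B}$ containing $a$. An element $b$ dominates an element $c$ in $\mathcal{A}$ if every set of $\mathcal{A}$ that contains $c$ also contains $b$. (Under the hypotheses, for each $i\in[m-1]$ there is a set of $\mathcal{A}$ not containing $i$, and $A_i$ contains every $j>i$ but not $i$, so the sets $A_0,\dots,A_{m-1}$ are distinct.) *)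

From mathcomp Require Import all_boot all_order.
Set Implicit Arguments. Unset Strict Implicit. Unset Printing Implicit Defensive.

(* Ground type 'I_m.+1 = {0,...,m}; the label 0 is unused, so [m] = {1,...,m}
   is represented by the elements i with 0 < i. *)

Definition union_closed (T : finType) (A : {set {set T}}) : Prop :=
  forall S U, S \in A -> U \in A -> S :|: U \in A.

Definition universe (T : finType) (A : {set {set T}}) : {set T} :=
  \bigcup_(S in A) S.

Definition separating (T : finType) (A : {set {set T}}) : Prop :=
  forall x y, x \in universe A -> y \in universe A -> x != y ->
    exists2 S, S \in A & (x \in S) != (y \in S).

Definition deg (T : finType) (B : {set {set T}}) (a : T) : nat :=
  #|[set S in B | a \in S]|.

Definition dominates (T : finType) (A : {set {set T}}) (b c : T) : Prop :=
  forall S, S \in A -> c \in S -> b \in S.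

Definition Aset (T : finType) (A : {set {set T}}) (i : T) : {set T} :=
  \bigcup_(S in A | i \notin S) S.

Definition Scoll (m : nat) (A : {set {set 'I_m.+1}}) : {set {set 'I_m.+1}} :=
  universe A |: [set Aset A i | i : 'I_m.+1 in [pred i : 'I_m.+1 | (0 < i < m)%N]].

From mathcomp Require Import all_boot all_order zify.

Set Implicit Arguments.
Unset Strict Implicit.
Unset Printing Implicit Defensive.

(** Let k be the largest element of {1, ..., m-1} dominating i.  By separation,
    an element never dominates a different element of larger or equal degree,
    so k lies in A_l for every l < k; and k lies in A_l for every l > k, since
    otherwise l would dominate k, hence i, against the maximality of k.  As the
    m sets of S are pairwise distinct, k lies in all of them but A_k. *)

Section Domination.
Variables (T : finType) (A : {set {set T}}).

Lemma dominatesP b c :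
  reflect (dominates A b c) [forall S in A, (c \in S) ==> (b \in S)].
Proof.
apply: (iffP forall_inP) => [bc S SA cS | bc S SA]; last exact/implyP/bc.
exact: implyP (bc S SA) cS.
Qed.

Lemma dominates_trans a b c :
  dominates A a b -> dominates A b c -> dominates A a c.
Proof. by move=> ab bc S SA cS; apply/ab/bc. Qed.

Lemma mem_Aset i x :
  reflect (exists2 S, S \in A & (i \notin S) && (x \in S)) (x \in Aset A i).
Proof.
apply: (iffP bigcupP) => [[S /andP[SA iS] xS] | [S SA /andP[iS xS]]].
  by exists S; rewrite ?iS.
by exists S; rewrite ?SA.
Qed.

Lemma Aset_notin i : i \notin Aset A i.
Proof. by apply/mem_Aset => -[S _ /andP[/negP]]. Qed.

Lemma notin_Aset_dominates l k : k \notin Aset A l -> dominates A l k.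
Proof.
move=> kNAl S SA kS; apply/negPn/negP => lNS.
by case/negP: kNAl; apply/mem_Aset; exists S; rewrite ?lNS.
Qed.

Lemma separating_in_Aset i j :
  separating A -> i \in universe A -> j \in universe A -> i != j ->
  deg A i <= deg A j -> j \in Aset A i.
Proof.
move=> sepA iU jU neq_ij le_ij.
apply/negPn/negP => /notin_Aset_dominates dom_ij.
have sub_ji : [set S in A | j \in S] \subset [set S in A | i \in S].
  by apply/subsetP => S; rewrite !inE => /andP[SA jS]; rewrite SA dom_ij.
have eq_ji : [set S in A | j \in S] = [set S in A | i \in S].
  by apply/eqP; rewrite eqEcard sub_ji.
have [S SA] := sepA i j iU jU neq_ij.
by move/setP/(_ S): eq_ji; rewrite !inE SA /= => ->; rewrite eqxx.
Qed.

End Domination.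

Section Collection.
Variables (m : nat) (A : {set {set 'I_m.+1}}).
Hypothesis sepA : separating A.
Hypothesis universeA : universe A = [set i : 'I_m.+1 | 0 < i].
Hypothesis deg_sorted :
  forall i j : 'I_m.+1, 0 < i -> i <= j -> deg A i <= deg A j.

Local Notation inner := [pred l : 'I_m.+1 | 0 < l < m].

Lemma mem_universe (x : 'I_m.+1) : 0 < x -> x \in universe A.
Proof. by rewrite universeA inE. Qed.

Lemma lt_in_Aset (l j : 'I_m.+1) : 0 < l -> l < j -> j \in Aset A l.
Proof.
move=> l_gt0 lt_lj; apply: separating_in_Aset => //.
- exact: mem_universe.
- exact/mem_universe/(leq_ltn_trans _ lt_lj).
- by rewrite neq_ltn lt_lj.
- exact/deg_sorted/ltnW.
Qed.

Lemma Aset_inj : {in inner &, injective (Aset A)}.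
Proof.
move=> l1 l2 /andP[l1_gt0 _] /andP[l2_gt0 _] eqA.
case: (ltngtP l1 l2) => [lt12 | lt21 | /val_inj //].
  by have := lt_in_Aset l1_gt0 lt12; rewrite eqA (negbTE (Aset_notin _ _)).
by have := lt_in_Aset l2_gt0 lt21; rewrite -eqA (negbTE (Aset_notin _ _)).
Qed.

Lemma card_inner : #|inner| = m - 1.
Proof.
have -> : #|inner| = #|~: [set (ord0 : 'I_m.+1); ord_max]|.
  apply: eq_card => l; rewrite !inE -!val_eqE /= negb_or -lt0n.
  have := ltn_ord l; case: (val l) => [|n] //=; rewrite ltnS => lt_nm.
  by rewrite ltn_neqAle lt_nm andbT.
have := cardsC [set (ord0 : 'I_m.+1); ord_max].
rewrite cards2 card_ord -val_eqE /= eq_sym -lt0n.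
by case: ltnP => /=; lia.
Qed.

Lemma card_Scoll : 0 < m -> #|Scoll A| = m.
Proof.
move=> m_gt0.
have universe_notin : universe A \notin [set Aset A l | l in inner].
  apply/imsetP => -[l /andP[l_gt0 _] eqA].
  by have := mem_universe l_gt0; rewrite eqA (negbTE (Aset_notin _ _)).
rewrite cardsU1 universe_notin card_in_imset; last exact: Aset_inj.
by rewrite card_inner; lia.
Qed.

Lemma deg_Scoll (k : 'I_m.+1) : 0 < k < m ->
  (forall l : 'I_m.+1, 0 < l < m -> l != k -> k \in Aset A l) ->
  deg (Scoll A) k = m - 1.
Proof.
move=> k_in k_in_Aset.
have Ak_in : Aset A k \in Scoll A by apply/setU1P; right; apply: imset_f.
rewrite /deg; have -> : [set S in Scoll A | k \in S] = Scoll A :\ Aset A k.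
  apply/setP => S; rewrite in_setD1 in_set.
  have [-> | neS] := eqVneq S (Aset A k).
    by rewrite (negbTE (Aset_notin A k)) andbF.
  rewrite andbC /=; apply: andb_idl => /setU1P[-> | /imsetP[l l_in eqS]].
    by apply: mem_universe; case/andP: k_in.
  rewrite eqS in neS *; apply: k_in_Aset => //.
  by apply: contraNneq neS => ->.
have m_gt0 : 0 < m by case/andP: k_in => /ltn_trans; apply.
have := cardsD1 (Aset A k) (Scoll A); rewrite Ak_in card_Scoll //= => eq_m.
by apply: (@addnI 1); rewrite -eq_m; lia.
Qed.

End Collection.

Theorem lemma1 (m : nat) (A : {set {set 'I_m.+1}}) :
  (2 <= m)%N ->
  union_closed A ->
  separating A ->
  universe A = [set i : 'I_m.+1 | (0 < i)%N] ->
  (forall i j : 'I_m.+1, (0 < i)%N -> (i <= j)%N -> (deg A i <= deg A j)%N) ->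
  forall i : 'I_m.+1, (0 < i < m)%N -> (deg (Scoll A) i < m - 1)%N ->
  exists k : 'I_m.+1,
    [/\ (0 < k < m)%N, deg (Scoll A) k = (m - 1)%N & dominates A k i].
Proof.
move=> _ _ sepA universeA deg_sorted i i_in _.
pose P (k : 'I_m.+1) := (0 < k < m) && [forall S in A, (i \in S) ==> (k \in S)].
have Pi : P i by rewrite /P i_in; apply/dominatesP.
have [k /andP[k_in /dominatesP dom_ki] k_max] := @arg_maxnP _ i P val Pi.
exists k; split => //; apply: deg_Scoll => // l l_in neq_lk.
case: (ltngtP l k) => [lt_lk | lt_kl | /val_inj eq_lk].
- by apply: lt_in_Aset => //; case/andP: l_in.
- apply/negPn/negP => /notin_Aset_dominates dom_lk.
  have /k_max : P l.
    by rewrite /P l_in; apply/dominatesP/(dominates_trans dom_lk).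
  by rewrite /= leqNgt lt_kl.
- by rewrite eq_lk eqxx in neq_lk.
Qed.
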